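(* Let $S_0$ be a nonempty set, let $S$ be the collection of all finite subsets of $S_0$, partially ordered by set inclusion, and let $\mathcal{G}$ be any group acting on $S_0$, with the action extended to $S$ by $Ta = \{Tx : x \in a\}$ for $a \in S$, $T \in \mathcal{G}$. Then on the quotient $S/\mathcal{G}$ (the set of orbits of this action) the strong relation ($A \preceq B$ iff for all $a \in A$ there is $b \in B$ with $a \subseteq b$) and the weak relation ($A \preceq B$ iff there exist $a \in A$, $b \in B$ with $a \subseteq b$) are identical, and this relation is a partial order on $S/\mathcal{G}$. *)

From Stdlib Require Import List.

Record group_action (S0 : Type) := GroupAction {
  grp : Type;
  gmul : grp -> grp -> grp;
  gone : grp;
  ginv : grp -> grp;
  gmul_assoc : forall a b c, gmul a (gmul b c) = gmul (gmul a b) c;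
  gmul_1l : forall a, gmul gone a = a;
  gmul_Vl : forall a, gmul (ginv a) a = gone;
  act : grp -> S0 -> S0;
  act_one : forall x, act gone x = x;
  act_mul : forall g h x, act (gmul g h) x = act g (act h x)
}.
Arguments grp {S0}.
Arguments act {S0} _ _ _.

Definition subset_of {S0 : Type} (a b : S0 -> Prop) : Prop :=
  forall x, a x -> b x.

Definition finite_subset {S0 : Type} (a : S0 -> Prop) : Prop :=
  exists l : list S0, forall x, a x <-> In x l.

Definition act_set {S0 : Type} (Gs : group_action S0) (T : grp Gs)
  (a : S0 -> Prop) : S0 -> Prop :=
  fun y => exists x, a x /\ y = act Gs T x.

Definition orbit {S0 : Type} (Gs : group_action S0) (a : S0 -> Prop)
  : (S0 -> Prop) -> Prop :=
  fun b => exists T : grp Gs, b = act_set Gs T a.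

(* The quotient S/G: orbits of finite subsets. *)
Definition orbits {S0 : Type} (Gs : group_action S0) : Type :=
  { O : (S0 -> Prop) -> Prop | exists a, finite_subset a /\ O = orbit Gs a }.

Definition strong_rel {S0 : Type} {Gs : group_action S0} (A B : orbits Gs) : Prop :=
  forall a, proj1_sig A a -> exists b, proj1_sig B b /\ subset_of a b.

Definition weak_rel {S0 : Type} {Gs : group_action S0} (A B : orbits Gs) : Prop :=
  exists a b, proj1_sig A a /\ proj1_sig B b /\ subset_of a b.

Definition is_partial_order {X : Type} (R : X -> X -> Prop) : Prop :=
  (forall x, R x x) /\
  (forall x y z, R x y -> R y z -> R x z) /\
  (forall x y, R x y -> R y x -> x = y).

(* Strong and weak comparison agree because any witness [a ⊆ b] for one pair
   of representatives can be transported by a group element to any other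
   representative of the orbit of [a].  For antisymmetry, [A ⪯ B ⪯ A] yields [a ⊆ b ⊆ T a] for some
   representative [a] and group element [T]; since [a] is finite and [T] acts
   injectively, [a ⊆ T a] forces [T a = a], hence [b = a] and [A = B]. *)

From Stdlib Require Import List FinFun ClassicalDescription.
From Stdlib Require Import FunctionalExtensionality PropExtensionality ProofIrrelevance.

Lemma pred_ext {X : Type} (a b : X -> Prop) : (forall x, a x <-> b x) -> a = b.
Proof.
  intros Hab. apply functional_extensionality; intros x.
  apply propositional_extensionality, Hab.
Qed.

Lemma finite_subset_NoDup {X : Type} (a : X -> Prop) :
  finite_subset a -> exists l, NoDup l /\ forall x, a x <-> In x l.
Proof.
  intros [l Hl].
  pose (dec := fun x y : X => excluded_middle_informative (x = y)).
  exists (nodup dec l); split.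
  - apply NoDup_nodup.
  - intros x. rewrite nodup_In. apply Hl.
Qed.

Lemma finite_subset_image_invariant {X : Type} (f : X -> X) (a : X -> Prop) :
  finite_subset a -> Injective f ->
  (forall y, a y -> exists x, a x /\ y = f x) ->
  forall x, a x -> a (f x).
Proof.
  intros Hfin Hinj Hsub.
  destruct (finite_subset_NoDup a Hfin) as [l [Hnodup Hl]].
  assert (Hincl : incl (map f l) l).
  { apply NoDup_length_incl; [exact Hnodup | now rewrite length_map |].
    intros y Hy. apply Hl in Hy. destruct (Hsub y Hy) as [x [Hx ->]].
    apply in_map, Hl, Hx. }
  intros x Hx. apply Hl, Hincl, in_map, Hl, Hx.
Qed.

Section OrbitsOfSubsets.

Variable S0 : Type.
Variable Gs : group_action S0.

Notation "g * h" := (gmul S0 Gs g h).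
Notation "g ^-1" := (ginv S0 Gs g) (at level 3, format "g ^-1").
Notation "1" := (gone S0 Gs).

Lemma act_inj (T : grp Gs) : Injective (act Gs T).
Proof.
  intros x y Hxy.
  rewrite <- (act_one _ Gs x), <- (act_one _ Gs y), <- (gmul_Vl _ Gs T), !act_mul, Hxy.
  reflexivity.
Qed.

Lemma act_set1 (a : S0 -> Prop) : act_set Gs 1 a = a.
Proof.
  apply pred_ext; intros y; split.
  - intros [x [Hx ->]]. now rewrite act_one.
  - intros Hy. exists y. now rewrite act_one.
Qed.

Lemma act_setM (g h : grp Gs) (a : S0 -> Prop) :
  act_set Gs (g * h) a = act_set Gs g (act_set Gs h a).
Proof.
  apply pred_ext; intros y; split.
  - intros [x [Hx ->]]. exists (act Gs h x). split; [now exists x | apply act_mul].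
  - intros [z [[x [Hx ->]] ->]]. exists x. split; [exact Hx | symmetry; apply act_mul].
Qed.

Lemma act_setK (T : grp Gs) (a : S0 -> Prop) : act_set Gs T^-1 (act_set Gs T a) = a.
Proof. now rewrite <- act_setM, gmul_Vl, act_set1. Qed.

Lemma act_set_subset (T : grp Gs) (a b : S0 -> Prop) :
  subset_of a b -> subset_of (act_set Gs T a) (act_set Gs T b).
Proof. intros Hab y [x [Hx ->]]. exists x. split; [apply Hab, Hx | reflexivity]. Qed.

Lemma act_set_fixed (T : grp Gs) (a : S0 -> Prop) :
  finite_subset a -> subset_of a (act_set Gs T a) -> act_set Gs T a = a.
Proof.
  intros Hfin Hsub.
  pose proof (finite_subset_image_invariant _ a Hfin (act_inj T) Hsub) as Hinv.
  apply pred_ext; intros y; split.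
  - intros [x [Hx ->]]. apply Hinv, Hx.
  - apply Hsub.
Qed.

Lemma orbit_refl (a : S0 -> Prop) : orbit Gs a a.
Proof. exists 1. symmetry. apply act_set1. Qed.

Lemma orbit_act_set (a b : S0 -> Prop) (U : grp Gs) :
  orbit Gs a b -> orbit Gs a (act_set Gs U b).
Proof. intros [T ->]. exists (U * T). symmetry. apply act_setM. Qed.

Lemma orbit_transport (a b c : S0 -> Prop) :
  orbit Gs a b -> orbit Gs a c -> exists U, c = act_set Gs U b.
Proof.
  intros [T ->] [T' ->]. exists (T' * T^-1).
  now rewrite act_setM, act_setK.
Qed.

Lemma orbit_eq (a b : S0 -> Prop) : orbit Gs a b -> orbit Gs b = orbit Gs a.
Proof.
  intros Hab. apply pred_ext; intros c; split.
  - intros [U ->]. apply orbit_act_set, Hab.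
  - intros Hac. destruct (orbit_transport a b c Hab Hac) as [U ->]. now exists U.
Qed.

Lemma orbits_eq (A B : orbits Gs) : proj1_sig A = proj1_sig B -> A = B.
Proof. destruct A, B. apply subset_eq_compat. Qed.

Lemma strong_rel_weak_rel (A B : orbits Gs) : strong_rel A B -> weak_rel A B.
Proof.
  destruct A as [OA [a0 [? ->]]]. intros Hstrong.
  destruct (Hstrong a0 (orbit_refl a0)) as [b [Hb Hab]].
  exists a0, b. split; [exact (orbit_refl a0) | split; assumption].
Qed.

Lemma weak_rel_strong_rel (A B : orbits Gs) : weak_rel A B -> strong_rel A B.
Proof.
  destruct A as [OA [a0 [? ->]]], B as [OB [b0 [? ->]]].
  intros [a [b [Ha [Hb Hab]]]] a' Ha'; simpl in *.
  destruct (orbit_transport a0 a a' Ha Ha') as [U ->].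
  exists (act_set Gs U b). split.
  - apply orbit_act_set, Hb.
  - apply act_set_subset, Hab.
Qed.

Lemma strong_rel_refl (A : orbits Gs) : strong_rel A A.
Proof. intros a Ha. exists a. split; [exact Ha | intros x Hx; exact Hx]. Qed.

Lemma strong_rel_trans (A B C : orbits Gs) :
  strong_rel A B -> strong_rel B C -> strong_rel A C.
Proof.
  intros HAB HBC a Ha.
  destruct (HAB a Ha) as [b [Hb Hab]]. destruct (HBC b Hb) as [c [Hc Hbc]].
  exists c. split; [exact Hc | intros x Hx; apply Hbc, Hab, Hx].
Qed.

Lemma strong_rel_antisym (A B : orbits Gs) :
  strong_rel A B -> strong_rel B A -> A = B.
Proof.
  intros HAB HBA. apply orbits_eq.
  destruct A as [OA [a0 [Hfin ->]]], B as [OB [b0 [? ->]]]; simpl in *.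
  destruct (HAB a0 (orbit_refl a0)) as [b [Hb Hab]].
  destruct (HBA b Hb) as [a [[T ->] Hba]].
  assert (Hfixed : act_set Gs T a0 = a0).
  { apply act_set_fixed; [exact Hfin | intros x Hx; apply Hba, Hab, Hx]. }
  rewrite Hfixed in Hba.
  assert (Hb0 : b = a0) by (apply pred_ext; intros x; split; auto).
  now rewrite <- (orbit_eq b0 b Hb), Hb0.
Qed.

End OrbitsOfSubsets.

Theorem corollary1 (S0 : Type) (hne : inhabited S0) (Gs : group_action S0) :
  (forall A B : orbits Gs, strong_rel A B <-> weak_rel A B) /\
  is_partial_order (@strong_rel S0 Gs).
Proof.
  split.
  - intros A B. split; [apply strong_rel_weak_rel | apply weak_rel_strong_rel].
  - split; [| split].
    + apply strong_rel_refl.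
    + apply strong_rel_trans.
    + apply strong_rel_antisym.
Qed.
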